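(* Let $d\geq 2$ and $U=(u_{ij})_{i,j=1}^d\in\mathcal{U}_d(\mathbb{C})$. If there exist $l\in\{1,\dots,d\}$ and $D_1,D_2\in\mathcal{DU}_d(\mathbb{C})$ such that $D_2U^\dagger D_1U|l\rangle$ is a maximally mutually coherent state (i.e., the coherence engine produces a maximally mutually coherent state with just three strokes), then $$\exists\,l\in\{1,\dots,d\}\ \forall\,m\in\{1,\dots,d\}:\quad \max_i|\bar{u}_{im}u_{il}|\leq\frac12\left(\sum_{j=1}^d|\bar{u}_{jm}u_{jl}|+\frac{1}{\sqrt d}\right),$$ equivalently, $$\max_l\min_m\left(\sum_{j=1}^d\frac{|\bar{u}_{jm}u_{jl}|}{2}-\max_i|\bar{u}_{im}u_{il}|\right)\geq-\frac{1}{2\sqrt d}.$$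
   Context: $\mathcal{U}_d(\mathbb{C})$ denotes the group of $d\times d$ unitary matrices and $\mathcal{DU}_d(\mathbb{C})$ its subgroup of diagonal unitary matrices; $\{|j\rangle\}$ is the computational basis (Alice's basis), and Bob's basis is $\{U^\dagger|j\rangle\}$. Alice's free operations are $\mathcal{DU}_d(\mathbb{C})$ and Bob's are $\{U^\dagger DU: D\in\mathcal{DU}_d(\mathbb{C})\}$. A three-stroke protocol: Alice prepares a basis state $|l\rangle$, Bob applies some $U^\dagger D_1U$, Alice applies some $D_2$. A pure state $|\psi\rangle$ is maximally mutually coherent if $|\langle j|\psi\rangle|=|\langle j|U|\psi\rangle|=1/\sqrt d$ for all $j$. *)

From HB Require Import structures.
From mathcomp Require Import all_boot all_order all_algebra.
Set Implicit Arguments. Unset Strict Implicit. Unset Printing Implicit Defensive.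
Import Order.TTheory GRing.Theory Num.Theory.
Local Open Scope ring_scope.

(* Complex scalars: any numeric closed field C (e.g. the complex numbers);
   z^* is conjugation, `|z| the modulus, sqrtC the nonnegative square root. *)

Definition adj {C : numClosedFieldType} {m n : nat} (A : 'M[C]_(m, n)) : 'M[C]_(n, m) :=
  (map_mx Num.conj A)^T.

Definition unitary {C : numClosedFieldType} {d : nat} (U : 'M[C]_d) : Prop :=
  U *m adj U = 1%:M /\ adj U *m U = 1%:M.

Definition diag_unitary {C : numClosedFieldType} {d : nat} (D : 'M[C]_d) : Prop :=
  is_diag_mx D /\ unitary D.

Definition ket {C : numClosedFieldType} {d : nat} (l : 'I_d) : 'cV[C]_d :=
  \col_j (if j == l then 1 else 0).

(* |psi> is maximally mutually coherent w.r.t. bases {|j>} and {U^dagger |j>} *)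
Definition max_mut_coherent {C : numClosedFieldType} {d : nat}
  (U : 'M[C]_d) (psi : 'cV[C]_d) : Prop :=
  forall j : 'I_d,
    `|psi j 0| = (sqrtC (d%:R : C))^-1 /\ `|(U *m psi) j 0| = (sqrtC (d%:R : C))^-1.

(* Write |psi> = D2 U^dagger D1 U |l>. Since D2 only rotates phases, its amplitude on |m> has
   modulus |sum_i conj(u_im) u_il delta_i| with |delta_i| = 1 the diagonal entries of D1, and
   maximal coherence makes this modulus 1/sqrt d. Isolating the k-th term of the sum by the
   triangle inequality gives |conj(u_km) u_kl| <= 1/sqrt d + sum_(i <> k) |conj(u_im) u_il|,
   which is the claimed bound. *)

From HB Require Import structures.
From mathcomp Require Import all_boot all_order all_algebra.
Set Implicit Arguments. Unset Strict Implicit. Unset Printing Implicit Defensive.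
Import Order.TTheory GRing.Theory Num.Theory.
Local Open Scope ring_scope.

Lemma diag_mulmxE (R : pzRingType) (d n : nat) (D : 'M[R]_d) (A : 'M[R]_(d, n)) i j :
  is_diag_mx D -> (D *m A) i j = D i i * A i j.
Proof.
move=> /is_diag_mxP D_diag; rewrite mxE (bigD1 i) //= big1 ?addr0 // => k k_neq_i.
by rewrite D_diag ?mul0r // eq_sym.
Qed.

Lemma bigmax_le_cst (R : numDomainType) (I : finType) (F : I -> R) (c : R) :
  0 <= c -> (forall i, F i <= c) -> \big[Num.max/0]_i F i <= c.
Proof.
move=> c_ge0 F_le; apply: (big_ind (fun x => x <= c)) => // x y x_le y_le.
by rewrite /Num.max /Order.max; case: ifP.
Qed.

Lemma ler_norm_term_sum_unimodular (R : numDomainType) (I : finType)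
    (a z : I -> R) (k : I) : (forall i, `|z i| = 1) ->
  2%:R * `|a k| <= \sum_i `|a i| + `|\sum_i a i * z i|.
Proof.
move=> z_unit.
have ak_eq : a k * z k = \sum_i a i * z i - \sum_(i | i != k) a i * z i.
  by rewrite (bigD1 k) //= addrK.
have ak_le : `|a k| <= `|\sum_i a i * z i| + \sum_(i | i != k) `|a i|.
  rewrite -[`|a k|]mulr1 -(z_unit k) -normrM ak_eq.
  apply: (le_trans (ler_normB _ _)); rewrite lerD2l.
  apply: (le_trans (ler_norm_sum _ _ _)); apply: ler_sum => i _.
  by rewrite normrM z_unit mulr1.
by rewrite (bigD1 k) //= mulr_natl mulr2n -addrA lerD2l addrC.
Qed.

Section ThreeStroke.
Variables (C : numClosedFieldType) (d : nat).

Lemma diag_unitary_norm (D : 'M[C]_d) i : diag_unitary D -> `|D i i| = 1.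
Proof.
move=> [D_diag [D_unit _]].
have : (D *m adj D) i i = 1 by rewrite D_unit mxE eqxx.
rewrite diag_mulmxE // !mxE -normCK => /eqP.
rewrite sqrf_eq1 => /orP[/eqP // | /eqP D_neg].
by have := normr_ge0 (D i i); rewrite D_neg ler0N1.
Qed.

Lemma mulmx_ketE (A : 'M[C]_d) l j : (A *m ket l) j 0 = A j l.
Proof.
rewrite mxE (bigD1 l) //= big1 ?addr0; first by rewrite mxE eqxx mulr1.
by move=> k /negbTE k_neq_l; rewrite mxE k_neq_l mulr0.
Qed.

Lemma three_stroke_entry (U D1 : 'M[C]_d) l m : is_diag_mx D1 ->
  (adj U *m D1 *m U *m ket l) m 0 = \sum_i (U i m)^* * U i l * D1 i i.
Proof.
move=> D1_diag; rewrite -!mulmxA mxE; apply: eq_bigr => i _.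
by rewrite diag_mulmxE // mulmx_ketE !mxE mulrAC mulrA.
Qed.

Lemma three_stroke_coherent_norm (U D1 D2 : 'M[C]_d) l m :
  diag_unitary D1 -> diag_unitary D2 ->
  max_mut_coherent U (D2 *m adj U *m D1 *m U *m ket l) ->
  `|\sum_i (U i m)^* * U i l * D1 i i| = (sqrtC (d%:R : C))^-1.
Proof.
move=> [D1_diag _] D2_unit /(_ m) [<- _].
rewrite -!mulmxA diag_mulmxE; last exact: D2_unit.1.
by rewrite normrM diag_unitary_norm // mul1r !mulmxA three_stroke_entry.
Qed.

End ThreeStroke.

Theorem proposition14 (C : numClosedFieldType) (d : nat) (U : 'M[C]_d) :
  (2 <= d)%N -> unitary U ->
  (exists (l : 'I_d) (D1 D2 : 'M[C]_d),
      diag_unitary D1 /\ diag_unitary D2 /\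
      max_mut_coherent U (D2 *m adj U *m D1 *m U *m ket l)) ->
  exists l : 'I_d, forall m : 'I_d,
    \big[Num.max/0]_(i < d) `|(U i m)^* * U i l|
      <= 2^-1 * (\sum_(j < d) `|(U j m)^* * U j l| + (sqrtC (d%:R : C))^-1).
Proof.
move=> _ _ [l [D1 [D2 [D1_unit [D2_unit coh]]]]]; exists l => m.
have norm_eq := three_stroke_coherent_norm m D1_unit D2_unit coh.
apply: bigmax_le_cst => [|k].
  by rewrite mulr_ge0 ?invr_ge0 ?ler0n // addr_ge0 ?sumr_ge0 // invr_ge0 sqrtC_ge0 ler0n.
rewrite ler_pdivlMl ?ltr0n // -norm_eq.
apply: ler_norm_term_sum_unimodular => i.
exact: diag_unitary_norm.
Qed.
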